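(* Let $R\ge1$, $\mathbf{x}$ a vector of pairwise distinct reals, $\mathbf{c}=(c_1,\dots,c_R)\in\mathbb{R}^R$, and let $\mathbf{u}\in\mathbb{C}^R$ be an eigenvector of $B(\mathbf{x},\mathbf{c})$. Then $$\Big|\sum_{r=1}^R c_ru_r\Big|^2=\sum_{r=1}^R|c_ru_r|^2.$$
   Context: $B(\mathbf{x},\mathbf{c})$ is the $R\times R$ matrix with entries $b_{m,m}=0$ and $b_{m,n}=\frac{c_mc_n}{x_m-x_n}$ for $m\ne n$. *)

(* Complex numbers are modelled by an arbitrary
   numClosedFieldType C (e.g. algC, or the complex numbers); "real" means
   membership in Num.real. *)
From HB Require Import structures.
From mathcomp Require Import all_boot all_order all_algebra.
Set Implicit Arguments. Unset Strict Implicit. Unset Printing Implicit Defensive.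
Import Order.TTheory GRing.Theory Num.Theory.
Local Open Scope ring_scope.

Definition Bmat (C : numClosedFieldType) (R : nat) (x c : 'I_R -> C) : 'M[C]_R :=
  \matrix_(m < R, n < R) (if m == n then 0 else c m * c n / (x m - x n)).

(* Let B = B(x,c), D = diag(x) and u an eigenvector, B u = lam u.
   Since x and c are real, B is real and antisymmetric, i.e. skew-Hermitian:
   B^* = -B.  For any skew-Hermitian A with A u = lam u one has
   u^* A = -conj(lam) u^*, hence for every matrix D
       u^* (D A - A D) u = (lam + conj lam) u^* D u;
   taking D = 1 shows lam + conj lam = 0 (lam is purely imaginary), so the
   quadratic form of every commutator D A - A D vanishes at u.
   For the Cauchy-like matrix B the commutator with D = diag(x) is explicit:
       diag(x) B - B diag(x) = c c^T - diag(c_r^2),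
   because (x_m - x_n) b_{m,n} = c_m c_n off the diagonal.  Evaluating the two
   quadratic forms, u^* c c^T u = |sum_r c_r u_r|^2 and
   u^* diag(c_r^2) u = sum_r |c_r u_r|^2, gives the theorem. *)

From HB Require Import structures.
From mathcomp Require Import all_boot all_order all_algebra.
From mathcomp Require Import ring.
Import Order.TTheory GRing.Theory Num.Theory.
Local Open Scope ring_scope.
Local Open Scope sesquilinear_scope.

Section SkewHermitianEigenvectors.
Context {C : numClosedFieldType} {n : nat}.
Implicit Types (A D : 'M[C]_n) (u : 'cV[C]_n) (lam : C).

Definition qform A u : C := (u ^t* *m A *m u) 0 0.

Lemma qformE A u : qform A u = \sum_i \sum_j (u i 0)^* * A i j * u j 0.
Proof.
rewrite /qform mxE exchange_big; apply: eq_bigr => j _.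
by rewrite mxE mulr_suml; apply: eq_bigr => i _; rewrite !mxE.
Qed.

Lemma qformB A D u : qform (A - D) u = qform A u - qform D u.
Proof. by rewrite /qform mulmxBr mulmxBl !mxE. Qed.

Lemma qform1_eq0 u : qform 1%:M u = 0 -> u = 0.
Proof.
rewrite qformE => hN; apply/matrixP => i j; rewrite (ord1 j) mxE.
have hsq : \sum_k `|u k 0| ^+ 2 = 0.
  rewrite -[RHS]hN; apply: eq_bigr => k _; rewrite (bigD1 k) //= big1.
    by rewrite mxE eqxx mulr1 addr0 normCKC.
  by move=> l /negPf hl; rewrite mxE eq_sym hl mulr0 mul0r.
have := psumr_eq0P (fun k _ => exprn_ge0 2 (normr_ge0 (u k 0))) hsq (i := i) isT.
by move/eqP; rewrite expf_eq0 /= normr_eq0 => /eqP.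
Qed.

Lemma trmxC_mul m p (M : 'M[C]_(m, n)) (N : 'M[C]_(n, p)) :
  (M *m N) ^t* = N ^t* *m M ^t*.
Proof. by rewrite trmx_mul map_mxM. Qed.

Context {A : 'M[C]_n} {lam : C} {u : 'cV[C]_n}.
Hypotheses (hA : A ^t* = - A) (hu : A *m u = lam *: u).

Lemma adjoint_skew_eigen : u ^t* *m A = - lam^* *: u ^t*.
Proof.
apply: oppr_inj; rewrite -mulmxN -hA -trmxC_mul hu.
by rewrite /= linearZ /= map_mxZ scaleNr opprK.
Qed.

Lemma qform_commutator D : qform (D *m A - A *m D) u = (lam + lam^*) * qform D u.
Proof.
have hDA : u ^t* *m (D *m A) *m u = lam *: (u ^t* *m D *m u).
  by rewrite !mulmxA -[_ *m A *m u]mulmxA hu scalemxAr.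
have hAD : u ^t* *m (A *m D) *m u = - lam^* *: (u ^t* *m D *m u).
  by rewrite !mulmxA adjoint_skew_eigen -!scalemxAl.
rewrite qformB /qform hDA hAD !mxE; ring.
Qed.

Hypothesis hu0 : u != 0.

Lemma skew_eigenvalue_imaginary : lam + lam^* = 0.
Proof.
have := qform_commutator 1%:M.
rewrite mul1mx mulmx1 subrr {1}/qform mulmx0 mul0mx mxE => /esym/eqP.
rewrite mulf_eq0 => /orP[/eqP // | /eqP /qform1_eq0 /eqP].
by rewrite (negPf hu0).
Qed.

Lemma qform_commutator_eq0 D : qform (D *m A - A *m D) u = 0.
Proof. by rewrite qform_commutator skew_eigenvalue_imaginary mul0r. Qed.

End SkewHermitianEigenvectors.

Section RealWeightForms.
Context {C : numClosedFieldType} {n : nat}.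
Variables (c : 'I_n -> C) (u : 'cV[C]_n).

Lemma qform_diag (d : 'I_n -> C) :
  qform (diag_mx (\row_i d i)) u = \sum_i d i * `|u i 0| ^+ 2.
Proof.
rewrite qformE; apply: eq_bigr => i _; rewrite (bigD1 i) //= big1 ?addr0.
  by rewrite !mxE eqxx mulr1n normCKC; ring.
by move=> j /negPf hj; rewrite !mxE eq_sym hj mulr0n mulr0 mul0r.
Qed.

Hypothesis hc : forall i, c i \is Num.real.

Lemma qform_rank_one :
  qform ((\row_i c i)^T *m \row_i c i) u = `| \sum_i c i * u i 0 | ^+ 2.
Proof.
rewrite qformE normCKC rmorph_sum mulr_suml; apply: eq_bigr => i _.
rewrite mulr_sumr; apply: eq_bigr => j _.
rewrite !mxE big_ord1 !mxE rmorphM /= (conj_Creal (hc i)); ring.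
Qed.

End RealWeightForms.

Section CauchyLikeMatrix.
Context {C : numClosedFieldType} {R : nat} {x c : 'I_R -> C}.

(* B(x,c) is real and antisymmetric, hence skew-Hermitian; this holds even
   when x is not injective, since 1/0 = 0. *)
Lemma Bmat_skew : (forall r, x r \is Num.real) -> (forall r, c r \is Num.real) ->
  (Bmat x c) ^t* = - Bmat x c.
Proof.
move=> hxr hcr; apply/matrixP => m n; rewrite !mxE eq_sym.
case: eqP => _; first by rewrite rmorph0 oppr0.
rewrite conj_Creal; last by rewrite !(rpredM, rpredV, rpredB).
by rewrite -[x n - x m]opprB invrN mulrN [c n * _]mulrC.
Qed.

Lemma Bmat_commutator : injective x ->
  diag_mx (\row_i x i) *m Bmat x c - Bmat x c *m diag_mx (\row_i x i)
  = (\row_i c i)^T *m \row_i c i - diag_mx (\row_i c i ^+ 2).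
Proof.
move=> hx; apply/matrixP => m n.
rewrite mul_diag_mx mul_mx_diag !mxE big_ord1 !mxE.
have [-> | hmn] := eqVneq m n; first by rewrite mulr0 mul0r subrr expr2 subrr.
have hxmn : x m - x n != 0 by rewrite subr_eq0 (inj_eq hx).
by rewrite mulr0n subr0 mulrC -mulrBr divfK.
Qed.

End CauchyLikeMatrix.

Theorem lemma7 (C : numClosedFieldType) (R : nat) (hR : (0 < R)%N)
  (x c : 'I_R -> C)
  (hxr : forall r, x r \is Num.real) (hcr : forall r, c r \is Num.real)
  (hx : injective x)
  (u : 'cV[C]_R) (lam : C)
  (hu0 : u != 0) (hu : Bmat x c *m u = lam *: u) :
  `| \sum_(r < R) c r * u r ord0 | ^+ 2 = \sum_(r < R) `| c r * u r ord0 | ^+ 2.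
Proof.
have := qform_commutator_eq0 (Bmat_skew hxr hcr) hu hu0 (diag_mx (\row_i x i)).
rewrite Bmat_commutator // qformB qform_rank_one // qform_diag.
move/eqP; rewrite subr_eq0 => /eqP ->.
by apply: eq_bigr => r _; rewrite normrM exprMn (real_normK (hcr r)).
Qed.
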